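(* Let $Q$ be a finite multiset of tuples (all with the same QI values) and $l\ge1$ an integer. Let $\dot{Q}$ be obtained from $Q$ by repeatedly removing one tuple whose SA value is a pillar of the current multiset, until the current multiset is $l$-eligible (ties among pillars broken arbitrarily). Then for every $l$-eligible sub-multiset $Q' \subseteq Q$ and every SA value $v$, $h(Q',v) \le h(\dot{Q},v)$.
   Context: Tuples carry a sensitive attribute (SA) value. For a multiset $Q$ of tuples and an SA value $v$, $h(Q,v)$ is the number of tuples of $Q$ with SA value $v$; the pillar height is $h(Q)=\max_v h(Q,v)$, and a pillar of $Q$ is an SA value $v$ with $h(Q,v)=h(Q)$. $Q$ is $l$-eligible if $|Q| \ge l\cdot h(Q)$ (i.e., at most $|Q|/l$ tuples share any SA value; the empty multiset is $l$-eligible). *)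

From mathcomp Require Import all_boot.
Set Implicit Arguments. Unset Strict Implicit. Unset Printing Implicit Defensive.

(* A multiset of tuples is a sequence Q : seq T (order irrelevant);
   sa : T -> V gives the sensitive attribute of each tuple. *)
Section Defs.
Variables (T V : eqType) (sa : T -> V).

Definition hv (Q : seq T) (v : V) : nat := count (fun t => sa t == v) Q.

(* pillar height h(Q) = max_v h(Q,v)  (0 for the empty multiset) *)
Definition hmax (Q : seq T) : nat := \max_(t <- Q) hv Q (sa t).

Definition pillar (Q : seq T) (v : V) : bool := (0 < hv Q v) && (hv Q v == hmax Q).

Definition eligible (l : nat) (Q : seq T) : bool := l * hmax Q <= size Q.

Definition submset (Q' Q : seq T) : Prop := forall x, count_mem x Q' <= count_mem x Q.

(* peel l Q Qd : Qd is a possible outcome of repeatedly removing one tuple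
   whose SA value is a pillar of the current multiset, until the current
   multiset is l-eligible (arbitrary tie-breaking). *)
Inductive peel (l : nat) : seq T -> seq T -> Prop :=
| peel_stop Q : eligible l Q -> peel l Q Q
| peel_step Q t Qd : ~~ eligible l Q -> t \in Q -> pillar Q (sa t) ->
    peel l (rem t Q) Qd -> peel l Q Qd.
End Defs.

From mathcomp Require Import all_boot.
From mathcomp Require Import zify.

(* Peeling preserves the invariant "every l-eligible Q' below Q has, for each
   SA value v, at most as many v-tuples as the current multiset".  A step
   removing a tuple with pillar value v could only break it if some eligible
   Q' matched the current multiset C on v; then l * h(C) = l * h(Q', v)
   <= l * h(Q') <= |Q'| <= |C|, so C would already be l-eligible and the
   peeling would have stopped. *)

Section Peeling.
Context {T V : eqType} {sa : T -> V}.

Lemma hv_rem {C : seq T} {t} v :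
  t \in C -> hv sa C v = hv sa (rem t C) v + (sa t == v).
Proof. by move=> tC; rewrite /hv (permP (perm_to_rem tC)) /= addnC. Qed.

Lemma hv_le_hmax (C : seq T) v : 0 < hv sa C v -> hv sa C v <= hmax sa C.
Proof.
rewrite /hv -has_count => /hasP [t tC /eqP <-].
exact: (leq_bigmax_seq (P := xpredT) (F := fun x => hv sa C (sa x)) t tC).
Qed.

Lemma count_submset (Q' Q : seq T) p : submset Q' Q -> count p Q' <= count p Q.
Proof.
elim: Q' Q => [|x Q' IH] Q le_Q'Q //=.
have xQ : x \in Q.
  by rewrite -has_pred1 has_count (leq_trans _ (le_Q'Q x)) //= eqxx.
rewrite (permP (perm_to_rem xQ)) /= leq_add2l; apply: IH => y.
by have := le_Q'Q y; rewrite (permP (perm_to_rem xQ)) /=; lia.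
Qed.

Lemma size_le_of_hv {Q' C : seq T} :
  (forall v, hv sa Q' v <= hv sa C v) -> size Q' <= size C.
Proof.
elim: Q' C => [|x Q' IH] C le_hv //=.
have: 0 < hv sa C (sa x) by rewrite (leq_trans _ (le_hv (sa x))) // /hv /= eqxx.
rewrite /hv -has_count => /hasP [t tC /eqP sa_t].
rewrite (perm_size (perm_to_rem tC)) /= ltnS; apply: IH => v.
by have := le_hv v; rewrite (hv_rem v tC) /hv /= sa_t; lia.
Qed.

Lemma hv_le_rem_pillar {l} {Q' C : seq T} {t} :
  eligible sa l Q' -> ~~ eligible sa l C -> t \in C -> pillar sa C (sa t) ->
  (forall v, hv sa Q' v <= hv sa C v) ->
  forall v, hv sa Q' v <= hv sa (rem t C) v.
Proof.
move=> elQ' nelC tC /andP [hCt_pos /eqP hCt] le_hv v.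
have := le_hv v; rewrite (hv_rem v tC).
case: eqVneq => [<- | _]; last by rewrite addn0.
rewrite addn1 leq_eqVlt ltnS => /orP [/eqP hQ't_rem | //].
have hQ't : hv sa Q' (sa t) = hmax sa C.
  by rewrite -hCt (hv_rem (sa t) tC) eqxx addn1.
case/negP: nelC; rewrite /eligible -hQ't.
apply: leq_trans (size_le_of_hv le_hv); apply: leq_trans elQ'.
by rewrite leq_mul2l hv_le_hmax ?orbT // hQ't -hCt.
Qed.

Lemma peel_hv_le {l C D} : peel sa l C D ->
  forall Q', eligible sa l Q' -> (forall v, hv sa Q' v <= hv sa C v) ->
  forall v, hv sa Q' v <= hv sa D v.
Proof.
elim=> [// | C0 t D0 nelC tC pil _ IH] Q' elQ' le_hv.
exact: IH elQ' (hv_le_rem_pillar elQ' nelC tC pil le_hv).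
Qed.

End Peeling.

Theorem lemma4 (T V : eqType) (sa : T -> V) (l : nat) (Q Qd : seq T) :
  1 <= l -> peel sa l Q Qd ->
  forall Q' : seq T, submset Q' Q -> eligible sa l Q' ->
  forall v : V, hv sa Q' v <= hv sa Qd v.
Proof.
move=> _ peelQ Q' subQ' elQ'.
by apply: (peel_hv_le peelQ Q' elQ') => v; apply: count_submset.
Qed.
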